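(* Let $K$ be a field of characteristic zero and $n\ge1$, and regard $\mathbb{S}_n\subseteq{\rm End}_K(P_n)$. Then (1) $1+F_n\subseteq\mathcal{C}(P_n)_0$, and (2) $\mathbb{S}_n^*+F_n\subseteq\mathcal{C}(P_n)_0$.
   Context: $\mathbb{S}_n$ is the $K$-algebra generated by $x_1,\dots,x_n,y_1,\dots,y_n$ with defining relations $y_ix_i=1$ and $[x_i,y_j]=[x_i,x_j]=[y_i,y_j]=0$ for $i\ne j$; it acts faithfully on $P_n=K[x_1,\dots,x_n]$ by $x_i*x^\alpha=x^{\alpha+e_i}$, $y_i*x^\alpha=x^{\alpha-e_i}$ if $\alpha_i>0$ and $0$ otherwise. $F_n$ is the ideal of $\mathbb{S}_n$ spanned by all $\prod_{i=1}^n(x_i^{\alpha_i}y_i^{\beta_i}-x_i^{\alpha_i+1}y_i^{\beta_i+1})$, $\alpha,\beta\in\mathbb{N}^n$. $\mathbb{S}_n^*$ is the group of units of $\mathbb{S}_n$. $\mathcal{C}(P_n)_0$ is the set of $K$-linear maps $\varphi:P_n\to P_n$ with finite-dimensional kernel and cokernel and index ${\rm ind}(\varphi)=\dim\ker\varphi-\dim{\rm coker}\,\varphi=0$. *)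

From HB Require Import structures.
From mathcomp Require Import all_boot all_order all_algebra.
From mathcomp Require Import mpoly.
Set Implicit Arguments. Unset Strict Implicit. Unset Printing Implicit Defensive.
Import GRing.Theory.
Local Open Scope ring_scope.

Section Jacobson.
Variables (K : fieldType) (n : nat).

Definition Pn := {mpoly K[n]}.

Definition opX (i : 'I_n) (p : Pn) : Pn := 'X_i * p.
Definition opY (i : 'I_n) (p : Pn) : Pn :=
  \sum_(m <- msupp p | (0 < m i)%N) p@_m *: 'X_[(m - U_(i))%MM].

(* S_n, regarded inside End_K(P_n): the (unital) K-subalgebra generated by
   the operators x_i, y_i.  (The action is faithful, so this is S_n.) *)
Inductive Sn : (Pn -> Pn) -> Prop :=
| Sn_id : Sn id
| Sn_X i : Sn (opX i)
| Sn_Y i : Sn (opY i)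
| Sn_add f g : Sn f -> Sn g -> Sn (fun p => f p + g p)
| Sn_scale (a : K) f : Sn f -> Sn (fun p => a *: f p)
| Sn_comp f g : Sn f -> Sn g -> Sn (f \o g)
| Sn_ext f g : Sn f -> f =1 g -> Sn g.

Definition Sn_unit (u : Pn -> Pn) : Prop :=
  Sn u /\ exists v, Sn v /\ (forall p, u (v p) = p) /\ (forall p, v (u p) = p).

Definition Fterm (i : 'I_n) (a b : nat) (p : Pn) : Pn :=
  iter a (opX i) (iter b (opY i) p)
  - iter a.+1 (opX i) (iter b.+1 (opY i) p).

Definition Fgen (al be : 'I_n -> nat) : Pn -> Pn :=
  foldr (fun i f => Fterm i (al i) (be i) \o f) id (enum 'I_n).

Definition Fn (f : Pn -> Pn) : Prop :=
  exists s : seq (K * ('I_n -> nat) * ('I_n -> nat)),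
    forall p, f p = \sum_(t <- s) t.1.1 *: Fgen t.1.2 t.2 p.

(* s is a basis of U modulo the subspace W (i.e. its image is a basis of U/W) *)
Definition basis_mod (W U : Pn -> Prop) (s : seq Pn) : Prop :=
  [/\ forall v, v \in s -> U v,
      forall c : seq K, W (\sum_(i < size s) c`_i *: s`_i) ->
        forall i, (i < size s)%N -> c`_i = 0
    & forall v, U v -> exists (c : seq K) (w : Pn),
        W w /\ v = w + \sum_(i < size s) c`_i *: s`_i].

Definition dim_mod (W U : Pn -> Prop) (d : nat) : Prop :=
  exists s, size s = d /\ basis_mod W U s.

Definition lin_map (phi : Pn -> Pn) : Prop :=
  forall (a : K) (u v : Pn), phi (a *: u + v) = a *: phi u + phi v.

(* C(P_n)_0 : K-linear maps with finite-dimensional kernel and cokernel and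
   index dim ker - dim coker = 0 *)
Definition C0 (phi : Pn -> Pn) : Prop :=
  lin_map phi /\
  exists d : nat,
    dim_mod (fun v => v = 0) (fun v => phi v = 0) d /\
    dim_mod (fun v => exists q, v = phi q) (fun _ => True) d.

End Jacobson.

From HB Require Import structures.
From mathcomp Require Import all_boot all_order all_algebra.
From mathcomp Require Import mpoly zify.
From Stdlib Require Import FunctionalExtensionality.
Set Implicit Arguments. Unset Strict Implicit. Unset Printing Implicit Defensive.
Import GRing.Theory.
Local Open Scope ring_scope.

(** Every generator of [F_n] maps [x^beta] to [x^alpha] and kills every other
    monomial, so an element [f] of [F_n] reads only the coefficients of finitely
    many monomials [M] and writes into their span [V]. Hence [1 + f] fixes every
    polynomial whose coefficients on [M] vanish and maps [V] into itself: its
    kernel is that of a square matrix on [V] and its cokernel is the cokernel of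
    the same matrix, so the index vanishes by rank-nullity. For a unit [u] of
    [S_n], [u + f = u (1 + u^-1 f)] and [u^-1 f] again has this finiteness
    property, while composing with a linear bijection changes neither kernel nor
    cokernel dimension. *)

Section LinearMaps.
Variables (K : fieldType) (n : nat).
Local Notation Pn := (Pn K n).
Implicit Types (f g : Pn -> Pn).

Lemma lin_mapD f : lin_map f -> {morph f : u v / u + v}.
Proof. by move=> lf u v; have := lf 1 u v; rewrite !scale1r. Qed.

Lemma lin_map0 f : lin_map f -> f 0 = 0.
Proof.
by move=> lf; apply: (@addrI _ (f 0)); rewrite addr0 -lin_mapD // addr0.
Qed.

Lemma lin_mapZ f : lin_map f -> forall a u, f (a *: u) = a *: f u.
Proof. by move=> lf a u; rewrite -[a *: u]addr0 lf lin_map0 // addr0. Qed.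

Lemma lin_map_sum f : lin_map f -> forall (I : Type) (r : seq I) (P : pred I) F,
  f (\sum_(i <- r | P i) F i) = \sum_(i <- r | P i) f (F i).
Proof.
move=> lf I r P F; elim/big_rec2: _ => [|i y1 y2 _ <-]; first exact: lin_map0.
exact: lin_mapD.
Qed.

Lemma lin_map_add f g : lin_map f -> lin_map g -> lin_map (fun p => f p + g p).
Proof. by move=> lf lg a u v; rewrite lf lg scalerDr addrACA. Qed.

Lemma lin_map_scale (c : K) f : lin_map f -> lin_map (fun p => c *: f p).
Proof. by move=> lf a u v; rewrite lf scalerDr !scalerA mulrC. Qed.

Lemma lin_map_comp f g : lin_map f -> lin_map g -> lin_map (f \o g).
Proof. by move=> lf lg a u v /=; rewrite lg lf. Qed.

Lemma lin_map_iter f k : lin_map f -> lin_map (iter k f).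
Proof. by move=> lf; elim: k => [|k IH] a u v //=; rewrite IH lf. Qed.

Lemma lin_map_ext f g : f =1 g -> lin_map f -> lin_map g.
Proof. by move=> fg lf a u v; rewrite -!fg. Qed.

Lemma sum_msupp_sub (G : 'X_{1..n} -> Pn) (p : Pn) (r : seq 'X_{1..n}) :
  uniq r -> {subset msupp p <= r} ->
  \sum_(m <- msupp p) p@_m *: G m = \sum_(m <- r) p@_m *: G m.
Proof.
move=> ur sub; rewrite [RHS](bigID (mem (msupp p))) /=.
rewrite [X in _ = _ + X]big1 ?addr0; last first.
  by move=> m /memN_msupp_eq0 ->; rewrite scale0r.
rewrite -[in RHS]big_filter; apply/perm_big/uniq_perm.
- exact: msupp_uniq.
- exact: filter_uniq.
by move=> m; rewrite mem_filter; case: (boolP (m \in msupp p)) => //= /sub ->.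
Qed.

Lemma lin_map_coef_sum (G : 'X_{1..n} -> Pn) :
  lin_map (fun p => \sum_(m <- msupp p) p@_m *: G m).
Proof.
move=> a u v /=.
set r := undup (msupp u ++ msupp v ++ msupp (a *: u + v)).
rewrite !(@sum_msupp_sub G _ r) ?undup_uniq //;
  try by move=> m Hm; rewrite mem_undup !mem_cat Hm ?orbT.
rewrite scaler_sumr -big_split /=; apply: eq_bigr => m _.
by rewrite mcoeffD mcoeffZ scalerDl scalerA.
Qed.

End LinearMaps.
Section MonomialAction.
Variables (K : fieldType) (n : nat).
Local Notation Pn := (Pn K n).
Implicit Types (p : Pn) (m : 'X_{1..n}) (i : 'I_n).

Lemma lin_map_opX i : lin_map (opX (K:=K) i).
Proof. by move=> a u v; rewrite /opX mulrDr scalerAr. Qed.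

Lemma lin_map_opY i : lin_map (opY (K:=K) i).
Proof.
apply: lin_map_ext (lin_map_coef_sum
  (fun m => if (0 < m i)%N then 'X_[(m - U_(i))%MM] else 0)) => p.
by rewrite /opY [RHS]big_mkcond; apply: eq_bigr => m _; case: ifP; rewrite ?scaler0.
Qed.

Definition setm m i (v : nat) : 'X_{1..n} :=
  [multinom (if j == i then v else m j) | j < n].

Lemma setmE m i v j : setm m i v j = if j == i then v else m j.
Proof. exact: mnmE. Qed.

Lemma setm_setm m i v w : setm (setm m i v) i w = setm m i w.
Proof. by apply/mnmP => j; rewrite !setmE; case: eqP. Qed.

Lemma setm_id m i : setm m i (m i) = m.
Proof. by apply/mnmP => j; rewrite setmE; case: eqP => [->|]. Qed.

Lemma opX_mpolyX i m : opX i ('X_[m] : Pn) = 'X_[setm m i (m i).+1].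
Proof.
rewrite /opX -mpolyXD; congr 'X_[_]; apply/mnmP => j.
by rewrite mnmDE mnm1E setmE; case: (eqVneq j i) => [->|_]; rewrite ?add1n.
Qed.

Lemma opY_mpolyX i m :
  opY i ('X_[m] : Pn) = if (0 < m i)%N then 'X_[setm m i (m i).-1] else 0.
Proof.
rewrite /opY msuppX big_mkcond big_seq1 mcoeffX eqxx scale1r.
case: ifP => // m_i_gt0; congr 'X_[_]; apply/mnmP => j.
by rewrite mnmBE mnm1E setmE; case: (eqVneq j i) => [->|_]; rewrite ?subn0 ?subn1.
Qed.

Lemma iter_opX_mpolyX i a m :
  iter a (opX i) ('X_[m] : Pn) = 'X_[setm m i (m i + a)].
Proof.
elim: a => [|a IH] /=; first by rewrite addn0 setm_id.
by rewrite IH opX_mpolyX setm_setm setmE eqxx addnS.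
Qed.

Lemma iter_opY_mpolyX i b m :
  iter b (opY i) ('X_[m] : Pn) =
  if (b <= m i)%N then 'X_[setm m i (m i - b)] else 0.
Proof.
elim: b => [|b IH] /=; first by rewrite subn0 setm_id.
rewrite IH; case: (leqP b (m i)) => hb; last first.
  by rewrite ifF ?(lin_map0 (lin_map_opY i)) //; lia.
rewrite opY_mpolyX setm_setm setmE eqxx.
case: (leqP b.+1 (m i)) => hb1; last by rewrite ifF //; lia.
by rewrite ifT; [congr 'X_[setm _ _ _]; lia | lia].
Qed.

Lemma Fterm_mpolyX i a b m :
  Fterm i a b ('X_[m] : Pn) = if m i == b then 'X_[setm m i a] else 0.
Proof.
have iterX0 k : iter k (opX i) (0 : Pn) = 0.
  exact: lin_map0 (lin_map_iter k (lin_map_opX i)).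
rewrite /Fterm !iter_opY_mpolyX; case: (ltngtP (m i) b) => h.
- by rewrite !iterX0 subr0.
- rewrite !iter_opX_mpolyX !setm_setm !setmE !eqxx.
  by rewrite (_ : m i - b.+1 + a.+1 = m i - b + a)%N ?subrr //; lia.
- by rewrite iterX0 subr0 iter_opX_mpolyX setm_setm setmE eqxx h subnn.
Qed.

Lemma lin_map_Fterm i a b : lin_map (@Fterm K n i a b).
Proof.
move=> c u v; rewrite /Fterm !(lin_map_iter _ (lin_map_opY i)).
by rewrite !(lin_map_iter _ (lin_map_opX i)) scalerBr opprD addrACA.
Qed.

Definition mnm_of (al : 'I_n -> nat) : 'X_{1..n} := [multinom al j | j < n].

Definition setm_on (al : 'I_n -> nat) (l : seq 'I_n) m : 'X_{1..n} :=
  [multinom (if j \in l then al j else m j) | j < n].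

Lemma foldr_Fterm_mpolyX al be (l : seq 'I_n) m : uniq l ->
  foldr (fun i f => Fterm i (al i) (be i) \o f) id l ('X_[m] : Pn) =
  if all (fun i => m i == be i) l then 'X_[setm_on al l m] else 0.
Proof.
elim: l => [|i l IH] /=.
  by move=> _; congr 'X_[_]; apply/mnmP => j; rewrite mnmE.
case/andP => il ul; rewrite IH //; case: (boolP (all _ l)) => hl; last first.
  by rewrite andbF; exact: lin_map0 (lin_map_Fterm _ _ _).
rewrite andbT Fterm_mpolyX mnmE (negbTE il); case: (m i == be i) => //.
congr 'X_[_]; apply/mnmP => j.
by rewrite setmE !mnmE in_cons; case: (eqVneq j i) => [->|].
Qed.

Lemma Fgen_mpolyX al be m :
  Fgen al be ('X_[m] : Pn) = if m == mnm_of be then 'X_[mnm_of al] else 0.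
Proof.
rewrite /Fgen foldr_Fterm_mpolyX ?enum_uniq //.
have -> : all (fun i => m i == be i) (enum 'I_n) = (m == mnm_of be).
  apply/allP/eqP => [m_be|->]; last by move=> j _; rewrite mnmE.
  by apply/mnmP => j; rewrite mnmE; apply/eqP/m_be; rewrite mem_enum.
by case: ifP => // _; congr 'X_[_]; apply/mnmP => j; rewrite !mnmE mem_enum.
Qed.

Lemma lin_map_Fgen al be : lin_map (@Fgen K n al be).
Proof.
rewrite /Fgen; elim: (enum 'I_n) => [|i l IH] //=.
exact: lin_map_comp (lin_map_Fterm _ _ _) IH.
Qed.

Lemma FgenE al be p : Fgen al be p = p@_(mnm_of be) *: 'X_[mnm_of al].
Proof.
rewrite {1}[p]mpolyE (lin_map_sum (lin_map_Fgen al be)).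
under eq_bigr => m _ do rewrite (lin_mapZ (lin_map_Fgen al be)) Fgen_mpolyX.
case: (boolP (mnm_of be \in msupp p)) => hbe; last first.
  rewrite memN_msupp_eq0 // scale0r big1_seq // => m /andP [_ hm].
  by rewrite ifF ?scaler0 //; apply: contraNF hbe => /eqP <-.
rewrite (big_rem _ hbe) /= eqxx big1_seq ?addr0 // => m /andP [_ hm].
rewrite ifF ?scaler0 //; apply: contraTF hm => /eqP ->.
by rewrite mem_rem_uniq ?msupp_uniq // inE eqxx.
Qed.

Lemma Sn_lin_map (u : Pn -> Pn) : Sn u -> lin_map u.
Proof.
elim => {u} [|i|i|f g _ lf _ lg|a f _ lf|f g _ lf _ lg|f g _ lf fg].
- by [].
- exact: lin_map_opX.
- exact: lin_map_opY.
- exact: lin_map_add.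
- exact: lin_map_scale.
- exact: lin_map_comp.
- exact: lin_map_ext lf.
Qed.

End MonomialAction.

Section SupportedMaps.
Variables (K : fieldType) (n : nat).
Local Notation Pn := (Pn K n).
Implicit Types (p : Pn) (f g : Pn -> Pn) (M : seq 'X_{1..n}).

(* [g] only reads the coefficients of the monomials in [M] and writes into
   their span; this is the finite-rank condition that makes [1 + g] Fredholm. *)
Definition supported_on M g :=
  (forall p, {in M, forall m, p@_m = 0} -> g p = 0) /\
  (forall p m, m \notin M -> (g p)@_m = 0).

Lemma supported_on_sub M M' g :
  {subset M <= M'} -> supported_on M g -> supported_on M' g.
Proof.
move=> sMM' [g0 gM]; split=> [p p0|p m m'M]; first by apply: g0 => m /sMM'/p0.
by apply: gM; apply: contra m'M => /sMM'.
Qed.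

Lemma supported_on_add M f g :
  supported_on M f -> supported_on M g -> supported_on M (fun p => f p + g p).
Proof.
move=> [f0 fM] [g0 gM]; split=> [p p0|p m mM]; first by rewrite f0 ?g0 ?addr0.
by rewrite mcoeffD fM ?gM ?addr0.
Qed.

Lemma supported_on_scale M (c : K) g :
  supported_on M g -> supported_on M (fun p => c *: g p).
Proof.
move=> [g0 gM]; split=> [p p0|p m mM]; first by rewrite g0 ?scaler0.
by rewrite mcoeffZ gM ?mulr0.
Qed.

Lemma supported_on_ext M f g : f =1 g -> supported_on M f -> supported_on M g.
Proof. by move=> fg [f0 fM]; split=> [p|p m]; rewrite -fg; [apply: f0|apply: fM]. Qed.

Lemma supported_on_Fgen al be :
  supported_on [:: mnm_of be; mnm_of al] (@Fgen K n al be).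
Proof.
split=> [p p0|p m]; rewrite FgenE; first by rewrite p0 ?scale0r ?mem_head.
rewrite !inE negb_or mcoeffZ mcoeffX => /andP [_ /negbTE].
by rewrite eq_sym => ->; rewrite mulr0.
Qed.

Lemma Fn_lin_supported f : Fn f -> lin_map f /\ exists M, supported_on M f.
Proof.
case=> s fE; suff [lf [M sf]] : lin_map (fun p => \sum_(t <- s) t.1.1 *: Fgen t.1.2 t.2 p)
    /\ exists M, supported_on M (fun p => \sum_(t <- s) t.1.1 *: Fgen t.1.2 t.2 p).
  by split; [exact: lin_map_ext lf | exists M; exact: supported_on_ext sf].
elim: s {fE} => [|[[c al] be] s [ls [M sM]]] /=.
  split; first by move=> a u v; rewrite !big_nil scaler0 addr0.
  by exists [::]; split=> [p|p m]; rewrite big_nil ?mcoeff0.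
pose F p := c *: Fgen al be p + \sum_(t <- s) t.1.1 *: Fgen t.1.2 t.2 p.
have FE : F =1 fun p => \sum_(t <- (c, al, be) :: s) t.1.1 *: Fgen t.1.2 t.2 p.
  by move=> p; rewrite big_cons.
split; first exact: lin_map_ext FE (lin_map_add (lin_map_scale c (lin_map_Fgen _ _)) ls).
exists [:: mnm_of be, mnm_of al & M]; apply: supported_on_ext FE _.
apply: supported_on_add; last by apply: supported_on_sub sM => m mM; rewrite !inE mM !orbT.
apply/supported_on_scale/supported_on_sub/supported_on_Fgen => m.
by rewrite !inE => /orP [->|->]; rewrite ?orbT.
Qed.

Lemma supported_on_comp M f v : lin_map v -> supported_on M f ->
  supported_on (M ++ flatten [seq msupp (v 'X_[m]) | m <- M]) (v \o f).
Proof.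
move=> lv [f0 fM]; split=> [p p0|p m].
  by rewrite /= f0 ?(lin_map0 lv) // => m mM; apply: p0; rewrite mem_cat mM.
rewrite mem_cat negb_or => /andP [_ m_vM] /=.
rewrite [f p]mpolyE (lin_map_sum lv) raddf_sum /= big1_seq // => m' /andP [_ m'f].
have m'M : m' \in M by apply: contraLR m'f; rewrite -mcoeff_eq0 => /fM ->.
rewrite (lin_mapZ lv) mcoeffZ [_@_m]memN_msupp_eq0 ?mulr0 //.
by move: m_vM; apply: contra => m_v; apply/flattenP; exists (msupp (v 'X_[m'])); first exact: map_f.
Qed.

End SupportedMaps.

Section MonomialCoordinates.
Variables (K : fieldType) (n : nat) (M : seq 'X_{1..n}).
Hypothesis uniq_M : uniq M.
Local Notation Pn := (Pn K n).
Local Notation k := (size M).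
Implicit Types (p : Pn) (r : 'rV[K]_k).

Definition mono (j : 'I_k) : 'X_{1..n} := nth 0%MM M j.
Definition coefs p : 'rV[K]_k := \row_j p@_(mono j).
Definition span_of r : Pn := \sum_(j < k) r 0 j *: 'X_[mono j].

Fact coefs_is_linear : linear coefs.
Proof. by move=> a p q; apply/rowP => j; rewrite !mxE mcoeffD mcoeffZ. Qed.
HB.instance Definition _ :=
  GRing.isLinear.Build K Pn 'rV[K]_k *:%R coefs coefs_is_linear.

Fact span_of_is_linear : linear span_of.
Proof.
move=> a r s; rewrite /span_of scaler_sumr -big_split; apply: eq_bigr => j _.
by rewrite !mxE scalerDl scalerA.
Qed.
HB.instance Definition _ :=
  GRing.isLinear.Build K 'rV[K]_k Pn *:%R span_of span_of_is_linear.

Lemma mono_inj : injective mono.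
Proof. by move=> i j /eqP; rewrite /mono nth_uniq // => /eqP/val_inj. Qed.

Lemma monoP m : m \in M -> exists j, m = mono j.
Proof.
by move=> mM; exists (Ordinal (etrans (index_mem m M) mM)); rewrite /mono nth_index.
Qed.

Lemma coefs_span_of r : coefs (span_of r) = r.
Proof.
apply/rowP => j; rewrite mxE /span_of raddf_sum /= (bigD1 j) //=.
rewrite mcoeffZ mcoeffX eqxx mulr1 big1 ?addr0 // => i ij.
by rewrite mcoeffZ mcoeffX (inj_eq mono_inj) (negbTE ij) mulr0.
Qed.

Lemma mcoeff_span_of_notin r m : m \notin M -> (span_of r)@_m = 0.
Proof.
move=> mM; rewrite /span_of raddf_sum big1 // => j _ /=.
rewrite mcoeffZ mcoeffX; case: eqP => [mj|_]; last by rewrite mulr0.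
by rewrite -mj /mono mem_nth in mM.
Qed.

Lemma span_of_coefs p : (forall m, m \notin M -> p@_m = 0) -> span_of (coefs p) = p.
Proof.
move=> p0; apply/mpolyP => m; case: (boolP (m \in M)) => mM.
  by have [j ->] := monoP mM; have /rowP/(_ j) := coefs_span_of (coefs p); rewrite !mxE.
by rewrite mcoeff_span_of_notin // p0.
Qed.

Lemma mcoeff_coefs0 p m : coefs p = 0 -> m \in M -> p@_m = 0.
Proof. by move=> /rowP p0 /monoP [j ->]; have := p0 j; rewrite !mxE. Qed.

Section Rows.
Variables (d : nat) (B : 'M[K]_(d, k)).

Definition span_rows : seq Pn := [seq span_of (row i B) | i <- enum 'I_d].

Lemma size_span_rows : size span_rows = d.
Proof. by rewrite size_map size_enum_ord. Qed.

Lemma sum_span_rows (c : seq K) :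
  \sum_(i < size span_rows) c`_i *: span_rows`_i = span_of ((\row_(i < d) c`_i) *m B).
Proof.
rewrite mulmx_sum_row linear_sum size_span_rows; apply: eq_bigr => i _.
by rewrite linearZ mxE /= (nth_map i) ?size_enum_ord // nth_ord_enum.
Qed.

Lemma span_rows_indep (c : seq K) : row_free B ->
  (\row_(i < d) c`_i) *m B = 0 -> forall i, (i < size span_rows)%N -> c`_i = 0.
Proof.
move=> freeB; rewrite -(mul0mx _ B) => /(row_free_inj freeB)/rowP c0 i.
by rewrite size_span_rows => id; have := c0 (Ordinal id); rewrite !mxE.
Qed.

Lemma sub_span_rows r : (r <= B)%MS ->
  exists c : seq K, span_of r = \sum_(i < size span_rows) c`_i *: span_rows`_i.
Proof.
case/submxP => w ->; exists [seq w 0 i | i <- enum 'I_d]; rewrite sum_span_rows.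
by congr (span_of (_ *m B)); apply/rowP => i; rewrite !mxE (nth_map i) ?size_enum_ord // nth_ord_enum.
Qed.

End Rows.

Section IdPlusSupported.
Variable g : Pn -> Pn.
Hypotheses (lin_g : lin_map g) (supp_g : supported_on M g).
Definition id_add p := p + g p.
Local Notation phi := id_add.

Definition id_add_mx : 'M[K]_k := \matrix_(i, j) (phi 'X_[mono i])@_(mono j).
Local Notation A := id_add_mx.

Lemma lin_map_id_add : lin_map phi.
Proof. exact: lin_map_add. Qed.

Lemma id_add_id p : {in M, forall m, p@_m = 0} -> phi p = p.
Proof. by move=> p0; rewrite /id_add supp_g.1 ?addr0. Qed.

Lemma mcoeff_id_add_notin p m : m \notin M -> (phi p)@_m = p@_m.
Proof. by move=> mM; rewrite mcoeffD supp_g.2 ?addr0. Qed.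

Lemma mcoeff_sub_coefs_in p : {in M, forall m, (p - span_of (coefs p))@_m = 0}.
Proof. by move=> m; apply: mcoeff_coefs0; rewrite linearB /= coefs_span_of subrr. Qed.

Lemma coefs_id_add p : coefs (phi p) = coefs p *m A.
Proof.
rewrite -[p in LHS](subrK (span_of (coefs p))) (lin_mapD lin_map_id_add).
rewrite id_add_id; last exact: mcoeff_sub_coefs_in.
rewrite linearD linearB /= coefs_span_of subrr add0r.
rewrite /span_of (lin_map_sum lin_map_id_add) linear_sum /= mulmx_sum_row.
apply: eq_bigr => j _; rewrite (lin_mapZ lin_map_id_add) linearZ /=.
by congr (_ *: _); apply/rowP => i; rewrite !mxE.
Qed.

Lemma id_add_span_of r : phi (span_of r) = span_of (r *m A).
Proof.
rewrite -[r in RHS]coefs_span_of -coefs_id_add span_of_coefs // => m mM.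
by rewrite mcoeff_id_add_notin // mcoeff_span_of_notin.
Qed.

Lemma id_add_ker_basis :
  basis_mod (fun v => v = 0) (fun v => phi v = 0) (span_rows (row_base (kermx A))).
Proof.
split.
- move=> _ /mapP [i _ ->]; rewrite id_add_span_of.
  have /sub_kermxP -> : (row i (row_base (kermx A)) <= kermx A)%MS.
    by rewrite (submx_trans (row_sub _ _)) // eq_row_base.
  exact: raddf0.
- move=> c; rewrite sum_span_rows => /(congr1 coefs); rewrite coefs_span_of raddf0.
  exact/span_rows_indep/row_base_free.
- move=> v phi_v0.
  have v_inM m : m \notin M -> v@_m = 0.
    by move=> mM; rewrite -(mcoeff_id_add_notin v mM) phi_v0 mcoeff0.
  have : (coefs v <= row_base (kermx A))%MS.
    by rewrite eq_row_base; apply/sub_kermxP; rewrite -coefs_id_add phi_v0 raddf0.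
  case/sub_span_rows => c vE; exists c, 0; split=> //.
  by rewrite add0r -vE span_of_coefs.
Qed.

Lemma id_add_coker_basis :
  basis_mod (fun v => exists q, v = phi q) (fun _ => True) (span_rows (row_base A^C%MS)).
Proof.
split=> //.
- move=> c [q]; rewrite sum_span_rows => /(congr1 coefs).
  rewrite coefs_span_of coefs_id_add => cE.
  apply/span_rows_indep/eqP; first exact: row_base_free.
  rewrite -submx0 -(capmx_compl A) sub_capmx {1}cE submxMl /=.
  by rewrite (submx_trans (submxMl _ _)) // eq_row_base.
- move=> v _.
  have := submx_full (coefs v) (addsmx_compl_full A).
  case/sub_addsmxP => [[u1 u2]] /= vE.
  have [|c uE] := @sub_span_rows _ (row_base A^C%MS) (u2 *m A^C%MS).
    by rewrite eq_row_base submxMl.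
  exists c, (phi (span_of u1 + (v - span_of (coefs v)))); split; first by eexists.
  rewrite -uE (lin_mapD lin_map_id_add) id_add_span_of id_add_id; last exact: mcoeff_sub_coefs_in.
  by rewrite addrAC -(linearD span_of) -vE addrC subrK.
Qed.

Lemma C0_id_add : C0 phi.
Proof.
split; first exact: lin_map_id_add.
exists (\rank (kermx A)); split.
  exists (span_rows (row_base (kermx A))).
  by split; [exact: size_span_rows | exact: id_add_ker_basis].
exists (span_rows (row_base A^C%MS)); split; last exact: id_add_coker_basis.
by rewrite size_span_rows mxrank_ker mxrank_compl.
Qed.

End IdPlusSupported.
End MonomialCoordinates.

Section FredholmIndexZero.
Variables (K : fieldType) (n : nat).
Local Notation Pn := (Pn K n).

Lemma C0_id_add_supported (M : seq 'X_{1..n}) (g : Pn -> Pn) :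
  lin_map g -> supported_on M g -> C0 (fun p => p + g p).
Proof.
move=> lin_g /(supported_on_sub (M' := undup M)) supp_g.
by apply: (C0_id_add (undup_uniq M) lin_g); apply: supp_g => m; rewrite mem_undup.
Qed.

Lemma C0_comp_bij (u v phi : Pn -> Pn) : lin_map u -> lin_map v ->
  cancel v u -> cancel u v -> C0 phi -> C0 (u \o phi).
Proof.
move=> lu lv vK uK [lphi [d [[s1 [size_s1 [s1_ker s1_free s1_span]]]
                           [s2 [size_s2 [_ s2_free s2_span]]]]]].
split; first exact: lin_map_comp.
exists d; split.
  exists s1; split=> //; split=> //.
    by move=> x /s1_ker /= ->; exact: lin_map0.
  by move=> x /= /(congr1 v); rewrite uK (lin_map0 lv); apply: s1_span.
exists (map u s2); split; first by rewrite size_map.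
have sum_map_u (c : seq K) : \sum_(i < size (map u s2)) c`_i *: (map u s2)`_i
    = u (\sum_(i < size s2) c`_i *: s2`_i).
  rewrite (lin_map_sum lu) size_map; apply: eq_bigr => i _.
  by rewrite (lin_mapZ lu) (nth_map 0).
split=> // [c|x _].
  rewrite sum_map_u size_map => -[q /(congr1 v)]; rewrite !uK => E.
  by apply: s2_free; exists q.
have [c [w [[q ->] E]]] := s2_span (v x) I.
exists c, (u (phi q)); split; first by exists q.
by rewrite sum_map_u -(lin_mapD lu) -E vK.
Qed.

End FredholmIndexZero.

Theorem corollary3p5 (K : fieldType) (n : nat) :
  [pchar K] =i pred0 -> (1 <= n)%N ->
  (forall f, Fn f -> C0 (fun p : Pn K n => p + f p)) /\
  (forall u f, Sn_unit u -> Fn f -> C0 (fun p : Pn K n => u p + f p)).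
Proof.
move=> _ _; split=> [f /Fn_lin_supported [lin_f [M supp_f]] | u f].
  exact: C0_id_add_supported lin_f supp_f.
move=> [Su [v [Sv [uK vK]]]] /Fn_lin_supported [lin_f [M supp_f]].
have lin_u := Sn_lin_map Su; have lin_v := Sn_lin_map Sv.
have -> : (fun p => u p + f p) = u \o (fun p => p + v (f p)).
  by apply: functional_extensionality => p /=; rewrite (lin_mapD lin_u) uK.
apply: (C0_comp_bij lin_u lin_v uK vK).
exact: C0_id_add_supported (lin_map_comp lin_v lin_f) (supported_on_comp lin_v supp_f).
Qed.
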